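(* Let $G$ be a connected graph with $n\ge 2$ nodes and diameter $D$, with nonnegative real loads, and run Algorithm 1 (described in the context). If the discrepancy of $G$ at the beginning of some round is $K$, then after that round the potential $p(G)$ has decreased by at least $K^2/(2D)$.
   Context: $G=(V,E)$ is an undirected connected graph, $n=|V|$, $D$ its diameter; each node $u$ holds a load $load(u)\ge 0$ (real). $L_{max},L_{min}$ denote the current maximum and minimum load, the discrepancy is $K=L_{max}-L_{min}$, $L_{avg}$ the average load (invariant under transfers), and the potential is $p(G)=\sum_{u\in V}(load(u)-L_{avg})^2$. Algorithm 1 (single proposal, continuous) proceeds in synchronous rounds; in each round, using the loads at the start of the round: (1) every node $u$ having at least one neighbor with strictly smaller load picks a neighbor $v$ maximizing $load(u)-load(v)$ (ties broken arbitrarily) and sends $v$ a proposal of value $p_{uv}=(load(u)-load(v))/2$; (2) every node that received at least one proposal accepts exactly one proposal of maximum value (ties arbitrary); (3) all accepted transfers are executed simultaneously (each accepted proposal $p_{wu}$ moves $p_{wu}$ from $w$ to $u$), and nodes report their new loads to neighbors. Thus each node gives load in at most one transfer and receives in at most one transfer per round. *)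

From mathcomp Require Import all_boot all_order all_algebra.
Set Implicit Arguments. Unset Strict Implicit. Unset Printing Implicit Defensive.
Import Order.TTheory GRing.Theory Num.Theory.
Local Open Scope ring_scope.

Section Defs.
Variable V : finType.

Definition simple_graph (e : rel V) : Prop := symmetric e /\ irreflexive e.

Definition connected_graph (e : rel V) : Prop := forall x y : V, connect e x y.

Definition walk_len (e : rel V) (x y : V) (k : nat) : Prop :=
  exists p : seq V, [/\ path e x p, last x p = y & size p = k].

Definition is_diameter (e : rel V) (D : nat) : Prop :=
  (forall x y, exists k, (k <= D)%N /\ walk_len e x y k) /\
  (exists x y, forall k, walk_len e x y k -> (D <= k)%N).

Variable R : realFieldType.

Definition Lavg (l : V -> R) : R := (\sum_(u : V) l u) / #|V|%:R.

Definition potential (l : V -> R) : R := \sum_(u : V) (l u - Lavg l) ^+ 2.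

Definition is_discrepancy (l : V -> R) (K : R) : Prop :=
  exists umax umin : V, K = l umax - l umin /\
    forall w, l umin <= l w /\ l w <= l umax.

(* step (1): proposals. prop u = Some v means u proposes to v. *)
Definition valid_proposals (e : rel V) (l : V -> R) (prop : V -> option V) : Prop :=
  forall u,
    match prop u with
    | Some v => [/\ e u v, l v < l u & forall w, e u w -> l u - l w <= l u - l v]
    | None => forall w, e u w -> l u <= l w
    end.

Definition prop_value (l : V -> R) (prop : V -> option V) (w : V) : R :=
  if prop w is Some v then (l w - l v) / 2 else 0.

(* step (2): acc v = Some w means v accepts the proposal from w,
   which must be one of maximal value among those v received. *)
Definition valid_acceptances (l : V -> R) (prop : V -> option V)
    (acc : V -> option V) : Prop :=
  forall v,
    match acc v with
    | Some w => prop w = Some v /\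
        forall w', prop w' = Some v -> prop_value l prop w' <= prop_value l prop w
    | None => forall w, prop w <> Some v
    end.

Definition sent (l : V -> R) (prop acc : V -> option V) (u : V) : R :=
  if prop u is Some v then (if acc v == Some u then (l u - l v) / 2 else 0) else 0.

Definition received (l : V -> R) (acc : V -> option V) (v : V) : R :=
  if acc v is Some w then (l w - l v) / 2 else 0.

(* step (3): simultaneous execution *)
Definition new_loads (l : V -> R) (prop acc : V -> option V) : V -> R :=
  fun u => l u - sent l prop acc u + received l acc u.

Definition alg1_round (e : rel V) (l l' : V -> R) : Prop :=
  exists prop acc : V -> option V,
    [/\ valid_proposals e l prop, valid_acceptances l prop acc &
        l' = new_loads l prop acc].

End Defs.

From Pilot Require Import Defs.
From mathcomp Require Import all_boot all_order all_algebra.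
From mathcomp Require Import ring lra.
Set Implicit Arguments. Unset Strict Implicit. Unset Printing Implicit Defensive.
Import Order.TTheory GRing.Theory Num.Theory.
Local Open Scope ring_scope.

(* Since a round conserves the total load, the potential drop equals the
   drop of the sum of squared loads, which is at least sum_v 2 r_v^2, where
   r_v is the amount received by v (a transfer of d contributes 2 d^2).
   To bound this from below, grow balls around a minimum-load node u_min
   and let h_t be the maximal load within distance t of u_min; h_0 = L_min,
   h_D = L_max, so the rises h_(t+1) - h_t add up to K, and by Cauchy-Schwarz
   their squares add up to at least K^2 / D.  Each strict rise is charged to
   the target v of the proposal of the new maximum: the rise lies in the
   window [l v, l v + 2 r_v], and the rises charged to a fixed v are disjoint
   subintervals of that window.  Hence sum_t rise_t^2 <= sum_v (2 r_v)^2,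
   and the theorem follows. *)

Lemma potential_drop_sqsum (V : finType) (R : realFieldType) (l l' : V -> R) :
  \sum_u l' u = \sum_u l u ->
  potential l - potential l' = \sum_u (l u ^+ 2 - l' u ^+ 2).
Proof.
move=> same_total; rewrite /potential /Lavg same_total; set c := _ / _.
have cross : \sum_u (l u - l' u) = 0 by rewrite sumrB same_total subrr.
rewrite -sumrB; transitivity (\sum_u (l u ^+ 2 - l' u ^+ 2) - 2 * c * \sum_u (l u - l' u)).
  by rewrite mulr_sumr -sumrB; apply: eq_bigr => u _; ring.
by rewrite cross mulr0 subr0.
Qed.

(* Cauchy-Schwarz for N reals: (sum a)^2 / N <= sum a^2, via the
   identity sum_{s,t} (a s - a t)^2 = 2 (N sum a^2 - (sum a)^2). *)
Lemma sqr_sum_div_le (R : realFieldType) (N : nat) (a : nat -> R) :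
  (\sum_(0 <= t < N) a t) ^+ 2 / N%:R <= \sum_(0 <= t < N) a t ^+ 2.
Proof.
set S := \sum_(0 <= t < N) a t; set Q := \sum_(0 <= t < N) a t ^+ 2.
case: N => [|n] in S Q *; first by rewrite invr0 mulr0 /Q big_geq.
have pair_sum : \sum_(0 <= s < n.+1) \sum_(0 <= t < n.+1) (a s - a t) ^+ 2 =
    2 * (n.+1%:R * Q - S ^+ 2).
  transitivity (\sum_(0 <= s < n.+1) (n.+1%:R * a s ^+ 2 + Q - (2 * S) * a s)).
    apply: eq_bigr => s _.
    rewrite (eq_bigr (fun t => a s ^+ 2 + a t ^+ 2 - (2 * a s) * a t)) => [|t _]; last by ring.
    rewrite sumrB big_split /= sumr_const_nat subn0 -mulr_sumr -/Q -/S -mulr_natl; ring.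
  rewrite sumrB big_split /= -!mulr_sumr sumr_const_nat subn0 -/Q -/S -mulr_natl; ring.
rewrite ler_pdivrMr ?ltr0Sn //; rewrite -subr_ge0.
have : 0 <= 2 * (n.+1%:R * Q - S ^+ 2).
  by rewrite -pair_sum; apply: sumr_ge0 => s _; apply: sumr_ge0 => t _; exact: sqr_ge0.
by rewrite pmulr_rge0 // mulrC.
Qed.

Section MonotoneIncrements.
Variables (R : realFieldType) (M : nat -> R).
Hypothesis M_mono : forall t, M t <= M t.+1.

(* Increments of a nondecreasing sequence taken at steps which all lie in
   a window [a, a + x] are disjoint subintervals of it, so they add up to
   at most [x]. *)
Lemma increments_in_window (S : pred nat) (a x : R) N : 0 <= x ->
  (forall t, S t -> a <= M t /\ M t.+1 <= a + x) ->
  \sum_(0 <= t < N | S t) (M t.+1 - M t) <= x.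
Proof.
move=> x0 window.
suff : let s := \sum_(0 <= t < N | S t) (M t.+1 - M t) in
    s = 0 \/ s <= x /\ s <= M N - a.
  by case=> [->|[]].
elim: N => [|N IH] /=; first by rewrite big_geq //; left.
rewrite big_mkcond big_nat_recr //= -big_mkcond; set s := \sum_(_ <= _ < _ | _) _ in IH *.
have := M_mono N; case: ifP => [/window [lo hi]|_] mono.
  by right; case: IH; lra.
by case: IH => [s0|IH]; [left|right]; lra.
Qed.

(* Each such increment is at most [x], so their squares add up to at
   most [x] times their sum, hence to at most [x^2]. *)
Lemma sq_increments_in_window (S : pred nat) (a x : R) N : 0 <= x ->
  (forall t, S t -> a <= M t /\ M t.+1 <= a + x) ->
  \sum_(0 <= t < N | S t) (M t.+1 - M t) ^+ 2 <= x ^+ 2.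
Proof.
move=> x0 window; apply: le_trans (_ : \sum_(0 <= t < N | S t) x * (M t.+1 - M t) <= _).
  apply: ler_sum => t /window [lo hi]; rewrite expr2.
  by apply: ler_wpM2r; have := M_mono t; lra.
by rewrite -mulr_sumr expr2 ler_wpM2l // (increments_in_window _ x0 window).
Qed.

End MonotoneIncrements.

Section Balls.
Variables (V : finType) (e : rel V) (c : V).

Fixpoint ball (t : nat) : {set V} :=
  if t is t'.+1 then ball t' :|: [set u | [exists w in ball t', e u w]] else [set c].

Lemma ball_mono t s : (t <= s)%N -> ball t \subset ball s.
Proof.
elim: s => [|s IH]; first by rewrite leqn0 => /eqP ->.
rewrite leq_eqVlt => /orP[/eqP -> //| lt_ts].
exact: subset_trans (IH lt_ts) (subsetUl _ _).
Qed.

Lemma centre_in_ball t : c \in ball t.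
Proof. by apply: (subsetP (ball_mono (leq0n t))); rewrite set11. Qed.

Lemma walk_in_ball x p : path e x p -> last x p = c -> x \in ball (size p).
Proof.
elim: p x => [|z p IH] x /=; first by move=> _ ->; rewrite set11.
case/andP=> exz pz lastc; rewrite !inE; apply/orP; right.
by apply/existsP; exists z; rewrite IH.
Qed.

Lemma new_in_ball t u :
  u \in ball t.+1 -> u \notin ball t -> exists2 w, w \in ball t & e u w.
Proof.
rewrite /= !inE => /orP[-> //|/existsP[w /andP[bw euw]]] _.
by exists w.
Qed.

Lemma ball_full D :
  (forall x, exists k, (k <= D)%N /\ walk_len e x c k) -> forall x, x \in ball D.
Proof.
move=> reach x; have [k [le_kD [p [px lastp size_p]]]] := reach x.
rewrite -size_p in le_kD; exact: (subsetP (ball_mono le_kD)) (walk_in_ball px lastp).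
Qed.

End Balls.

Section Peaks.
Variables (V : finType) (R : realFieldType) (e : rel V) (l : V -> R) (c : V).

Definition peak (t : nat) : V := [arg max_(u > c in ball e c t) l u]%O.
Definition height (t : nat) : R := l (peak t).

Lemma peak_spec t : peak t \in ball e c t /\ forall w, w \in ball e c t -> l w <= height t.
Proof.
by rewrite /height /peak; case: arg_maxP; [exact: centre_in_ball|].
Qed.

Lemma height_ge t w : w \in ball e c t -> l w <= height t.
Proof. exact: (peak_spec t).2. Qed.

Lemma height_mono t : height t <= height t.+1.
Proof.
apply: height_ge; apply: (subsetP (ball_mono e c (leqnSn t))).
exact: (peak_spec t).1.
Qed.

Lemma height0 : height 0 = l c.
Proof. by have [/set1P peak0 _] := peak_spec 0; rewrite /height peak0. Qed.

End Peaks.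

Section OneRound.
Variables (V : finType) (R : realFieldType) (e : rel V) (l : V -> R).
Variables (prop acc : V -> option V).
Hypothesis prop_ok : valid_proposals e l prop.
Hypothesis acc_ok : valid_acceptances l prop acc.

Local Notation sent := (sent l prop acc).
Local Notation received := (received l acc).
Local Notation l' := (new_loads l prop acc).

Lemma proposal_target_min u v w : prop u = Some v -> e u w -> l v <= l w.
Proof.
move=> puv euw; have := prop_ok u; rewrite puv => -[_ _ /(_ w euw)].
by rewrite lerD2l lerN2.
Qed.

Lemma proposes_of_lighter_neighbour u w :
  e u w -> l w < l u -> exists v, prop u = Some v.
Proof.
move=> euw lwu; have := prop_ok u; case: (prop u) => [v _|]; first by exists v.
by move=> /(_ w euw); rewrite leNgt lwu.
Qed.

Lemma proposal_downhill u v : prop u = Some v -> l v < l u.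
Proof. by move=> puv; have := prop_ok u; rewrite puv => -[]. Qed.

Lemma received_ge_proposal u v : prop u = Some v -> l u - l v <= 2 * received v.
Proof.
move=> puv; rewrite /Defs.received; have := acc_ok v.
case: (acc v) => [w [pwv /(_ u puv)]|/(_ u)] //.
by rewrite /prop_value puv pwv; lra.
Qed.

Lemma received_ge0 v : 0 <= received v.
Proof.
rewrite /Defs.received; have := acc_ok v; case: (acc v) => [w [pwv _]|_] //.
by have := proposal_downhill pwv; lra.
Qed.

Lemma sent_ge0 u : 0 <= sent u.
Proof.
rewrite /Defs.sent; case puv: (prop u) => [v|] //.
by case: ifP => // _; have := proposal_downhill puv; lra.
Qed.

Lemma sum_over_transfers (g : V -> V -> R) :
  \sum_u (if prop u is Some v then (if acc v == Some u then g u v else 0) else 0) =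
  \sum_v (if acc v is Some w then g w v else 0).
Proof.
pose transfer u v := (prop u == Some v) && (acc v == Some u).
transitivity (\sum_u \sum_v (if transfer u v then g u v else 0)).
  apply: eq_bigr => u _; rewrite /transfer; case: (prop u) => [v0|]; last by rewrite big1.
  rewrite (bigD1 v0) //= eqxx big1 ?addr0 // => v /negPf nv.
  by rewrite (inj_eq (@Some_inj _)) eq_sym nv.
rewrite exchange_big; apply: eq_bigr => v _; rewrite /transfer.
have := acc_ok v; case: (acc v) => [w0 [pw0 _]|_]; last by rewrite big1 // => u _; rewrite andbF.
rewrite (bigD1 w0) //= pw0 !eqxx big1 ?addr0 // => u /negPf nu.
by rewrite [Some w0 == _]eq_sym (inj_eq (@Some_inj _)) nu andbF.
Qed.

Lemma new_loads_total : \sum_u l' u = \sum_u l u.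
Proof.
have sent_eq : \sum_u sent u = \sum_v received v.
  exact: (sum_over_transfers (fun w v => (l w - l v) / 2)).
rewrite /new_loads big_split sumrB /= sent_eq; ring.
Qed.

(* The sum of squared loads drops by at least twice the sum of the
   squared received amounts: for a transfer of d from w to v the two
   endpoints contribute exactly 2 d^2, and the cross term 2 s r of a
   node that both sends s and receives r is nonnegative. *)
Lemma sqsum_drop : \sum_v 2 * received v ^+ 2 <= \sum_u (l u ^+ 2 - l' u ^+ 2).
Proof.
pose out u := 2 * l u * sent u - sent u ^+ 2.
pose inn v := - 2 * l v * received v - received v ^+ 2.
have per_node u : out u + inn u <= l u ^+ 2 - l' u ^+ 2.
  have := sent_ge0 u; have := received_ge0 u; rewrite /out /inn /new_loads.
  move=> r0 s0; have := mulr_ge0 s0 r0; nra.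
apply: le_trans (ler_sum _ (fun u _ => per_node u)); rewrite big_split /=.
have -> : \sum_u out u = \sum_v (if acc v is Some w then
    2 * l w * ((l w - l v) / 2) - ((l w - l v) / 2) ^+ 2 else 0).
  rewrite -sum_over_transfers; apply: eq_bigr => u _; rewrite /out /Defs.sent.
  by case: (prop u) => [v|]; [case: ifP => _|]; rewrite ?mulr0 ?expr0n /= ?subr0.
rewrite -big_split /=; apply: ler_sum => v _; rewrite /inn /Defs.received.
case: (acc v) => [w|]; last by rewrite expr0n /= !mulr0 !subr0 add0r.
by rewrite le_eqVlt; apply/orP; left; apply/eqP; field.
Qed.

End OneRound.

Section Charging.
Variables (V : finType) (R : realFieldType) (e : rel V) (l : V -> R) (c : V).
Variables (prop acc : V -> option V).
Hypothesis prop_ok : valid_proposals e l prop.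
Hypothesis acc_ok : valid_acceptances l prop acc.

Local Notation height := (height e l c).
Local Notation gain v := (2 * received l acc v).

(* The node charged for the rise of the height between steps [t] and [t.+1]:
   the target of the proposal of the new peak. *)
Definition rise_target (t : nat) : V := odflt c (prop (peak e l c t.+1)).

(* A strict rise is paid for by a transfer: the new peak lies outside
   [ball t] but next to it, hence proposes to a node [v] no heavier than
   [height t], and [v] then receives at least half of [height t.+1 - l v]. *)
Lemma rise_charged t : height t < height t.+1 ->
  l (rise_target t) <= height t /\
  height t.+1 <= l (rise_target t) + gain (rise_target t).
Proof.
move=> rise; have [in_next _] := peak_spec e l c t.+1.
have out_prev : peak e l c t.+1 \notin ball e c t.
  by apply/negP => /(height_ge l) /(lt_le_trans rise); rewrite ltxx.
have [w in_prev near] := new_in_ball in_next out_prev.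
have lw_le := height_ge l in_prev.
have [v pv] := proposes_of_lighter_neighbour prop_ok near (le_lt_trans lw_le rise).
rewrite /rise_target pv /=.
have := proposal_target_min prop_ok pv near; have := received_ge_proposal acc_ok pv.
rewrite /height in lw_le *; lra.
Qed.

Lemma sum_sq_rises N :
  \sum_(0 <= t < N) (height t.+1 - height t) ^+ 2 <= \sum_v gain v ^+ 2.
Proof.
pose rises t := height t < height t.+1.
have -> : \sum_(0 <= t < N) (height t.+1 - height t) ^+ 2 =
    \sum_(0 <= t < N | rises t) (height t.+1 - height t) ^+ 2.
  rewrite [RHS]big_mkcond; apply: eq_bigr => t _; case: ifP => // /negbT.
  rewrite -leNgt => flat; have mono := height_mono e l c t.
  have -> : height t.+1 = height t by apply/eqP; rewrite eq_le flat mono.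
  by rewrite subrr expr0n.
rewrite (partition_big rise_target predT) //=; apply: ler_sum => v _.
apply: (sq_increments_in_window (height_mono e l c)
  (S := fun t => rises t && (rise_target t == v)) (a := l v)).
  by rewrite mulr_ge0 // (received_ge0 prop_ok acc_ok).
by move=> t /andP[/rise_charged + /eqP <-].
Qed.

End Charging.

Theorem lemma2 (V : finType) (e : rel V) (D : nat) (R : realFieldType)
    (l l' : V -> R) (K : R) :
  simple_graph e -> connected_graph e -> (1 < #|V|)%N -> is_diameter e D ->
  (forall u, 0 <= l u) ->
  is_discrepancy l K ->
  alg1_round e l l' ->
  potential l - potential l' >= K ^+ 2 / (2 * D%:R).
Proof.
move=> _ _ _ [reach _] _ [umax [umin [-> bounds]]] [prop [acc [prop_ok acc_ok ->]]].
pose height := height e l umin.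
have top : height D = l umax.
  apply/eqP; rewrite eq_le height_ge ?ball_full // andbT.
  exact: (bounds (peak e l umin D)).2.
have telescope : l umax - l umin = \sum_(0 <= t < D) (height t.+1 - height t).
  by rewrite telescope_sumr // top /height height0.
rewrite (potential_drop_sqsum (new_loads_total acc_ok)).
apply: le_trans (sqsum_drop prop_ok acc_ok).
have := sqr_sum_div_le D (fun t => height t.+1 - height t); rewrite -telescope.
move/le_trans/(_ (sum_sq_rises umin prop_ok acc_ok D)) => cs.
have -> : \sum_v 2 * received l acc v ^+ 2 = (\sum_v (2 * received l acc v) ^+ 2) / 2.
  by rewrite mulr_suml; apply: eq_bigr => v _; field.
by rewrite invfM mulrA mulrAC ler_pM2r ?invr_gt0.
Qed.
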